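(* Let $(X,d)$ be a compact metric space and $f_{1,\infty}$ a sequence of continuous self-maps of $X$. If $(\mathcal{M}(X),\widetilde{f}_{1,\infty})$ is topologically transitive, then $(X,f_{1,\infty})$ is topologically transitive.
   Context: For $f_{1,\infty}=\{f_n\}_{n\ge1}$ write $f_1^n=f_n\circ\cdots\circ f_1$. $\mathcal{M}(X)$ is the space of Borel probability measures on $X$ with the weak$^*$ topology, and $\widetilde{f}_1^n(\mu)(A)=\mu((f_1^n)^{-1}(A))$ for Borel $A$. A non-autonomous system $(Y,g_{1,\infty})$ is topologically transitive if for every pair of non-empty open sets $U,V$ there is $n\in\mathbb{N}$ with $g_1^n(U)\cap V\ne\emptyset$. *)

From HB Require Import structures.
From mathcomp Require Import all_boot all_order all_algebra.
From mathcomp Require Import all_classical all_reals all_analysis.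
Set Implicit Arguments. Unset Strict Implicit. Unset Printing Implicit Defensive.
Import Order.TTheory GRing.Theory Num.Theory.
Import numFieldNormedType.Exports.
Local Open Scope classical_set_scope.
Local Open Scope ring_scope.

Notation Borel X := (g_sigma_algebraType (@open X)).

Definition PM (R : realType) (X : ptopologicalType) := probability (Borel X) R.

(* Non-autonomous compositions: f is indexed from 1 (f 0 is unused);
   comp f n = f n \o ... \o f 1, and comp f 0 = id. *)
Fixpoint comp (X : Type) (f : nat -> X -> X) (n : nat) : X -> X :=
  match n with
  | 0 => id
  | n'.+1 => f n'.+1 \o comp f n'
  end.

Definition topo_transitive (Y : topologicalType) (g : nat -> Y -> Y) : Prop :=
  forall U V : set Y, open U -> open V -> U !=set0 -> V !=set0 ->
    exists n, (1 <= n)%N /\ (comp g n @` U) `&` V !=set0.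

(* Weak-* topology on M(X): a set of probability measures is open iff it
   contains a basic weak-* neighbourhood of each of its points, i.e. a set
   {nu | forall i, |int g_i dnu - int g_i dmu| < eps} for finitely many
   continuous real functions g_i and eps > 0. *)
Definition weak_open (R : realType) (X : ptopologicalType) (W : set (PM R X)) :
  Prop :=
  forall mu, W mu ->
    exists (gs : seq (X -> R)) (eps : R),
      [/\ (forall g, g \in gs -> continuous g), 0 < eps &
        forall nu : PM R X,
          (forall g, g \in gs ->
             (`| (\int[nu]_x (g x)%:E) - (\int[mu]_x (g x)%:E) | < eps%:E)%E) ->
          W nu].

(* Topological transitivity of (M(X), tilde f_{1,oo}), where
   tilde f_1^n (mu) is the push-forward A |-> mu ((f_1^n)^-1 A). *)
Definition measure_transitive (R : realType) (X : ptopologicalType)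
  (f : nat -> X -> X) : Prop :=
  forall U V : set (PM R X), weak_open U -> weak_open V ->
    U !=set0 -> V !=set0 ->
    exists n, (1 <= n)%N /\
      exists (mu nu : PM R X), [/\ U mu, V nu &
        forall A : set (Borel X), measurable A ->
          nu A = mu (comp f n @^-1` A)].

From Pilot Require Import Defs.
From HB Require Import structures.
From mathcomp Require Import all_boot all_order all_algebra.
From mathcomp Require Import all_classical all_reals all_analysis.
Import numFieldNormedType.Exports.
Import Order.TTheory GRing.Theory Num.Theory.
Local Open Scope classical_set_scope.
Local Open Scope ring_scope.

(* An Urysohn bump g supported in a non-empty open set U turns U into the
   weak-* open set of measures mu with int g dmu > 1/2; it contains the Dirac
   mass at a point where g = 1, and each of its members gives U mass > 1/2.
   Transitivity on M(X) applied to the sets built from U and V yields mu with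
   mu U > 1/2 and mu ((f_1^n)^-1 V) > 1/2, so U meets (f_1^n)^-1 V. *)

Lemma open_measurable (X : ptopologicalType) (U : set X) :
  open U -> @measurable _ (Borel X) U.
Proof. exact: sub_sigma_algebra. Qed.
Arguments open_measurable {X U}.

Lemma continuous_measurable_fun (R : realType) (X : ptopologicalType)
  (g : X -> R) : continuous g -> measurable_fun (setT : set (Borel X)) g.
Proof.
move=> /continuousP cg.
apply: (measurability _ (measurable_realfun.RGenOpens.measurableE R)).
move=> _ [_ [a [b ->] <-]]; rewrite setTI.
apply: open_measurable; apply: cg; exact: interval_open.
Qed.

Lemma comp_continuous (X : topologicalType) (f : nat -> X -> X) :
  (forall n, continuous (f n)) -> forall n, continuous (Defs.comp f n).
Proof.
move=> cf; elim=> [|n IHn] /= x; first exact: cvg_id.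
exact: continuous_comp (IHn x) (cf _ _).
Qed.

Lemma probability_setI_neq0 (d : measure_display) (T : measurableType d)
  (R : realType) (P : probability T R) (A B : set T) :
  measurable A -> measurable B ->
  (2^-1%:E < P A)%E -> (2^-1%:E < P B)%E -> A `&` B !=set0.
Proof.
move=> mA mB PA PB; apply/set0P/eqP => AB0.
have : (2^-1%:E + 2^-1%:E < P (A `|` B))%E by rewrite measureU // lteD.
rewrite -EFinD -[X in X + X]mul1r -splitr ltNge probability_le1 //.
exact: measurableU.
Qed.
Arguments probability_setI_neq0 {d T R P A B}.

Section bump.
Variables (R : realType) (X : pseudoPMetricType R).

Lemma bump_function (x0 : X) (U : set X) : open U -> U x0 ->
  exists g : X -> R, [/\ continuous g, (forall x, 0 <= g x <= 1),
    g x0 = 1 & (forall x, ~ U x -> g x = 0)].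
Proof.
move=> oU Ux0.
have : uniform_separator [set x0] (~` U).
  apply: (@point_uniform_separator R); first exact: open_closedC.
  by move=> /(_ Ux0).
move=> /(@uniform_separatorP _ R) [f [cf f01 f0 f1]].
exists (fun x => 1 - f x); split.
- by move=> x; apply: continuousB; [exact: cvg_cst | exact: cf].
- move=> x; have := f01 (f x) (ex_intro2 _ _ x I erefl).
  rewrite /= in_itv /= => /andP[f_ge0 f_le1].
  by rewrite subr_ge0 f_le1 lerBlDr lerDl.
- by rewrite (f0 (f x0) (ex_intro2 _ _ x0 erefl erefl)) subr0.
- by move=> x nUx; rewrite (f1 (f x) (ex_intro2 _ _ x nUx erefl)) subrr.
Qed.

Variables (g : X -> R) (U : set X).
Hypotheses (oU : open U) (cg : continuous g) (g01 : forall x, 0 <= g x <= 1)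
  (g0 : forall x, ~ U x -> g x = 0).

Lemma integral_bump_le (mu : {measure set Borel X -> \bar R}) :
  (0 <= \int[mu]_x (g x)%:E <= mu U)%E.
Proof.
have g_ge0 x : (0 <= (g x)%:E)%E by rewrite lee_fin; case/andP: (g01 x).
apply/andP; split; first exact: integral_ge0.
have mU := open_measurable oU.
rewrite -(setIT U) -integral_indic //.
apply: ge0_le_integral => //.
- apply/measurable_realfun.measurable_EFinP.
  exact: continuous_measurable_fun.
- apply/measurable_realfun.measurable_EFinP.
  exact: measurable_realfun.measurable_indic.
- move=> x _; rewrite lee_fin indicE.
  have [Ux|nUx] := pselect (U x).
    by rewrite mem_set //; case/andP: (g01 x).
  by rewrite g0 // memNset.
Qed.

Definition bump_nbhd : set (PM R X) :=
  [set mu : PM R X | (2^-1%:E < \int[mu]_x (g x)%:E)%E].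

Lemma bump_nbhd_measure_gt_half (mu : PM R X) :
  bump_nbhd mu -> (2^-1%:E < mu U)%E.
Proof. by move=> /lt_le_trans; apply; case/andP: (integral_bump_le mu). Qed.

Lemma integral_bump_fin_num (mu : PM R X) :
  (\int[mu]_x (g x)%:E)%E \is a fin_num.
Proof.
have /andP[ge0 leU] := integral_bump_le mu.
rewrite ge0_fin_numE // (le_lt_trans leU) // (le_lt_trans _ (ltry 1)) //.
exact: probability_le1 (open_measurable oU).
Qed.

Lemma weak_open_bump_nbhd : weak_open bump_nbhd.
Proof.
move=> mu; rewrite /bump_nbhd /= -(fineK (integral_bump_fin_num mu)) lte_fin.
set a := fine _ => half_lt_a.
exists [:: g], (a - 2^-1); split; first by move=> g'; rewrite inE => /eqP ->.
  by rewrite subr_gt0.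
move=> nu /(_ g (mem_head _ _)).
rewrite -(fineK (integral_bump_fin_num mu)) -/a.
rewrite -(fineK (integral_bump_fin_num nu)) -EFinB !lte_fin => /ltr_distlCBl.
by rewrite opprB addrC subrK.
Qed.

Lemma bump_nbhd_dirac (x0 : X) :
  g x0 = 1 -> bump_nbhd (@dirac _ (Borel X) x0 R : PM R X).
Proof.
move=> gx0; rewrite /bump_nbhd /= integral_dirac //; last first.
  apply/measurable_realfun.measurable_EFinP.
  exact: continuous_measurable_fun.
by rewrite diracE mem_set // gx0 mul1e lte_fin invf_lt1 // ltr1n.
Qed.

End bump.
Arguments bump_function {R X x0 U}.
Arguments weak_open_bump_nbhd {R X g U}.
Arguments bump_nbhd_measure_gt_half {R X g U} oU cg g01 g0 {mu}.
Arguments bump_nbhd_dirac {R X g} cg {x0}.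

Theorem corollary3p1 (R : realType) (X : pseudoPMetricType R)
  (f : nat -> X -> X) :
  hausdorff_space X -> compact [set: X] ->
  (forall n, continuous (f n)) ->
  measure_transitive R f -> topo_transitive f.
Proof.
move=> _ _ cf mt U V oU oV [x0 Ux0] [y0 Vy0].
have [g [cg g01 gx0 g0]] := bump_function oU Ux0.
have [h [ch h01 hy0 h0]] := bump_function oV Vy0.
have [n [n1 [mu [nu [mu_g nu_h push]]]]] := mt _ _
  (weak_open_bump_nbhd oU cg g01 g0) (weak_open_bump_nbhd oV ch h01 h0)
  (ex_intro _ _ (bump_nbhd_dirac cg gx0))
  (ex_intro _ _ (bump_nbhd_dirac ch hy0)).
have oP : open (Defs.comp f n @^-1` V).
  by apply: open_comp => // x _; exact: comp_continuous.
have muU := bump_nbhd_measure_gt_half oU cg g01 g0 mu_g.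
have := bump_nbhd_measure_gt_half oV ch h01 h0 nu_h.
rewrite push; last exact: open_measurable.
move=> /(probability_setI_neq0 (open_measurable oU) (open_measurable oP) muU).
move=> [x [Ux Px]]; exists n; split => //.
by exists (Defs.comp f n x); split => //; exists x.
Qed.
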